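(* Let $q=2^n$ and $k\ge0$, and regard $D_k$ as a map ${\mathbb F}_q\to{\mathbb F}_q$. (i) $D_k(\mathcal T_1)=\{0\}$ iff $q+1$ divides $k$. If $q>2$, then $D_k(\mathcal T_0)=\{0\}$ iff $q-1$ divides $k$. (ii) $D_k(b)=b^2$ for all $b\in\mathcal T_1$ iff $k\equiv\pm2\pmod{q+1}$. If $q>2$, then $D_k(a)=a^2$ for all $a\in\mathcal T_0$ iff $k\equiv\pm2\pmod{q-1}$. (iii) Let $e\ge0$. If $e$ is even, then $D_{q^e-1}(a)=0$ and $D_{q^e+1}(a)=a^2$ for all $a\in{\mathbb F}_q$. If $e$ is odd, then $D_{q^e-1}(a)=0$ for $a\in\mathcal T_0\cup\{0\}$ and $=a^2$ for $a\in\mathcal T_1$, while $D_{q^e+1}(a)=a^2$ for $a\in\mathcal T_0\cup\{0\}$ and $=0$ for $a\in\mathcal T_1$.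
   Context: $D_k\in\mathbb Z[x]$: $D_0=2$, $D_1=x$, $D_{k+2}=xD_{k+1}-D_k$ (so $D_k(u+1/u)=u^k+u^{-k}$); over ${\mathbb F}_q$ with $q$ even, $D_0=0$. For $j\in\{0,1\}$, $\mathcal T_j=\{a\in{\mathbb F}_q^\times:\mathrm{Tr}_{{\mathbb F}_q/{\mathbb F}_2}(1/a)=j\}$. *)

From HB Require Import structures.
From mathcomp Require Import all_boot all_order all_algebra all_field.
Set Implicit Arguments. Unset Strict Implicit. Unset Printing Implicit Defensive.
Import Order.TTheory GRing.Theory.
Local Open Scope ring_scope.

(* Dickson-type polynomials D_k over an arbitrary ring R:
   D_0 = 2, D_1 = x, D_(k+2) = x D_(k+1) - D_k.  Over Z these are the D_k of
   the paper; over R they are the images of those under Z -> R. *)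
Fixpoint Dpair (R : nzRingType) (k : nat) : {poly R} * {poly R} :=
  match k with
  | 0 => (2%:R%:P, 'X)
  | k'.+1 => let p := Dpair R k' in (p.2, 'X * p.2 - p.1)
  end.

Definition Dpoly (R : nzRingType) (k : nat) : {poly R} := (Dpair R k).1.

Definition tr2 (F : finFieldType) (n : nat) (x : F) : F :=
  \sum_(i < n) x ^+ (2 ^ i).

Definition Tset (F : finFieldType) (n : nat) (j : bool) : {set F} :=
  [set a : F | (a != 0) && (tr2 n a^-1 == (j : nat)%:R)].

(* In characteristic 2 the values d_k = D_k(a) satisfy d_(k+2) = a d_(k+1) + d_k,
   d_0 = 0, d_1 = a and d_(2m) = d_m^2.  Hence on F_q^x one gets D_q(a) = a^q = a
   and D_(q-1)(a) = a^2 Tr(1/a)^2, so the sequence (d_k) has period m = q - 1 on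
   T_0 and m = q + 1 on T_1, and is symmetric: d_(m-j) = d_j.  Thus on T_j the map
   D_k coincides with D_r, where r <= m/2 <= |T_j| is the distance from k to the
   nearest multiple of m.  As |T_1| = q/2 and |T_0| = q/2 - 1 (the trace polynomial
   has degree q/2), the polynomials D_r and D_r - x^2, which also vanish at 0, have
   too many roots unless r = 0, resp. r = +-2 mod m.  Part (iii) follows from
   q^e = 1 mod q - 1 and q^e = (-1)^e mod q + 1. *)

From mathcomp Require Import all_boot all_order all_algebra all_field.
From mathcomp Require Import ring zify.
Set Implicit Arguments. Unset Strict Implicit. Unset Printing Implicit Defensive.
Import GRing.Theory.

Definition absmod (m k : nat) : nat := minn (k %% m) (m - k %% m).

Lemma absmod_le m k : (absmod m k).*2 <= m.
Proof.
rewrite /absmod; case: (posnP m) => [->|m_gt0]; first by rewrite sub0n minn0.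
by have := ltn_pmod k m_gt0; lia.
Qed.

Lemma absmod_eq0 m k : 0 < m -> (absmod m k == 0) = (m %| k).
Proof. by move=> m_gt0; have := ltn_pmod k m_gt0; rewrite /absmod /dvdn; lia. Qed.

Lemma absmod_eqmod m k : 0 < m ->
  k = absmod m k %[mod m] \/ k + absmod m k = 0 %[mod m].
Proof.
move=> m_gt0; rewrite /absmod; case: leqP => _; first by left; rewrite modn_mod.
right; rewrite -modnDml subnKC ?modnn ?mod0n //; exact/ltnW/ltn_pmod.
Qed.

Lemma succ_mod_of_dvd_pred d x : 0 < x -> d %| x.-1 -> x.+1 = 2 %[mod d].
Proof. by move=> x_gt0 /eqP dvd_x; rewrite -(prednK x_gt0) -addn2 -modnDml dvd_x. Qed.

Lemma pred_add2_mod_of_dvd_succ d x : 0 < x -> d %| x.+1 -> x.-1 + 2 = 0 %[mod d].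
Proof. by move=> x_gt0 /eqP dvd_x; rewrite addn2 prednK // dvd_x mod0n. Qed.

Lemma dvdn_succ_pred_expn q e : ~~ odd e -> q.+1 %| (q ^ e).-1.
Proof.
move=> e_even; rewrite -(odd_double_half e) (negbTE e_even) add0n -mul2n expnM.
apply: dvdn_trans (dvdn_pred_predX _ _).
by rewrite (_ : (q ^ 2).-1 = q.-1 * q.+1) ?dvdn_mull //; case: q => //= q; nia.
Qed.

Lemma dvdn_succ_succ_expn q e : odd e -> q.+1 %| (q ^ e).+1.
Proof.
case: e => // e /= e_even; case: (posnP q) => [->|q_gt0]; first exact: dvd1n.
have q_e_gt0 : 0 < q ^ e by rewrite expn_gt0 q_gt0.
rewrite expnS (_ : (q * q ^ e).+1 = q * (q ^ e).-1 + q.+1); last first.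
  by move: q_e_gt0; case: (q ^ e) => //= y _; nia.
by rewrite dvdn_add ?dvdn_mull ?dvdn_succ_pred_expn.
Qed.

Local Open Scope ring_scope.

Lemma imset_eq_set1P (T U : finType) (S : {set T}) (f : T -> U) (c : U) :
  S != set0 -> reflect {in S, forall x, f x = c} ([set f x | x in S] == [set c]).
Proof.
move=> S_neq0; apply: (iffP eqP) => [img_c x xS|f_c].
  by apply/set1P; rewrite -img_c imset_f.
have /set0Pn[x0 x0S] := S_neq0.
apply/setP => y; rewrite inE; apply/imsetP/eqP => [[x xS ->]|->]; first exact: f_c.
by exists x0; rewrite ?f_c.
Qed.

Section DicksonRing.
Variable R : nzRingType.

Lemma DpolySS k : Dpoly R k.+2 = 'X * Dpoly R k.+1 - Dpoly R k.
Proof. by []. Qed.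

Lemma size_Dpoly_monic k :
  (size (Dpoly R k) <= k.+1)%N /\ Dpoly R k.+1 \is monic /\ size (Dpoly R k.+1) = k.+2.
Proof.
elim: k => [|k [le_k [monic_k size_k]]].
  by rewrite /Dpoly /= size_polyC leq_b1 monicX size_polyX.
have size_XD : size ('X * Dpoly R k.+1) = k.+3.
  by rewrite -commr_polyX size_mulX ?monic_neq0 // size_k.
have size_lt : (size (- Dpoly R k)%R < size ('X * Dpoly R k.+1)%R)%N.
  by rewrite size_polyN size_XD; lia.
rewrite DpolySS size_polyDl // size_XD; rewrite size_k; split=> //; split=> //.
by rewrite monicE lead_coefDl // -commr_polyX lead_coefMX -monicE.
Qed.

Lemma size_Dpoly_le k : (size (Dpoly R k) <= k.+1)%N.
Proof. by case: (size_Dpoly_monic k). Qed.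

Lemma Dpoly_monic k : Dpoly R k.+1 \is monic.
Proof. by case: (size_Dpoly_monic k) => _ []. Qed.

Lemma size_DpolyS k : size (Dpoly R k.+1) = k.+2.
Proof. by case: (size_Dpoly_monic k) => _ []. Qed.

Lemma size_Dpoly_subX2 k : k != 2%N -> size (Dpoly R k - 'X^2) = maxn k.+1 3.
Proof.
move=> k_neq2; have size_X2 : size (- 'X^2 : {poly R}) = 3%N by rewrite size_polyN size_polyXn.
case: (ltnP k 2) => [k_lt2|k_ge3].
  rewrite addrC size_polyDl ?size_X2; first lia.
  by apply: leq_ltn_trans (size_Dpoly_le k) _; lia.
case: k k_neq2 k_ge3 => // j j_neq1 j_ge1.
by rewrite size_polyDl ?size_DpolyS ?size_X2; lia.
Qed.
End DicksonRing.

Section DicksonChar2.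
Variable R : comNzRingType.
Hypothesis charR2 : 2%N \in [pchar R].
Local Notation D k a := (Dpoly R k).[a].

Lemma eq_addr_mul2 (x y z : R) : x = y + 2%:R * z -> x = y.
Proof. by rewrite (pcharf0 charR2) mul0r addr0. Qed.

Lemma sqrrD_pchar2 (x y : R) : (x + y) ^+ 2 = x ^+ 2 + y ^+ 2.
Proof. by rewrite exprDn_pchar // pnatE. Qed.

Lemma dickson0 a : D 0 a = 0.
Proof. by rewrite /Dpoly /= hornerC (pcharf0 charR2). Qed.

Lemma dickson1 a : D 1 a = a.
Proof. by rewrite /Dpoly /= hornerX. Qed.

Lemma dicksonSS a k : D k.+2 a = a * D k.+1 a + D k a.
Proof. by rewrite DpolySS hornerD hornerN (oppr_pchar2 charR2) mulrC hornerMX mulrC. Qed.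

Lemma dickson2 a : D 2 a = a ^+ 2.
Proof. by rewrite dicksonSS dickson1 dickson0 addr0. Qed.

Lemma dickson_at0 k : D k 0 = 0.
Proof.
suff : D k 0 = 0 /\ D k.+1 0 = 0 by case.
elim: k => [|k [IHk IHkS]]; first by rewrite dickson0 dickson1.
by rewrite dicksonSS IHk IHkS mulr0 add0r.
Qed.

Lemma dickson_cassini a m :
  D m a ^+ 2 + a * D m a * D m.+1 a + D m.+1 a ^+ 2 = a ^+ 2.
Proof.
elim: m => [|m IHm]; first by rewrite dickson0 dickson1; ring.
rewrite dicksonSS -{}IHm; apply: (@eq_addr_mul2 _ _ (a * D m a * D m.+1 a + (a * D m.+1 a) ^+ 2)).
ring.
Qed.

Lemma dickson_double_pair a m :
  D m.*2 a = D m a ^+ 2 /\ D m.*2.+1 a = D m a * D m.+1 a + a.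
Proof.
elim: m => [|m [IHeven IHodd]]; first by rewrite dickson0 dickson1 expr0n mul0r add0r.
have even_step : D m.+1.*2 a = D m.+1 a ^+ 2.
  rewrite doubleS dicksonSS IHeven IHodd mulrDr -expr2 -(dickson_cassini a m).
  apply: (@eq_addr_mul2 _ _ (a * D m a * D m.+1 a + D m a ^+ 2)); ring.
split=> //; rewrite doubleS dicksonSS -doubleS even_step IHodd [D m.+2 a]dicksonSS; ring.
Qed.

Lemma dickson_double a m : D m.*2 a = D m a ^+ 2.
Proof. by case: (dickson_double_pair a m). Qed.

Lemma dickson_doubleS a m : D m.*2.+1 a = D m a * D m.+1 a + a.
Proof. by case: (dickson_double_pair a m). Qed.

Lemma dickson_exp2 a n : D (2 ^ n) a = a ^+ (2 ^ n).
Proof.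
elim: n => [|n IHn]; first by rewrite dickson1.
by rewrite expnS mul2n dickson_double IHn -exprM muln2.
Qed.

Section Periodic.
Variables (a : R) (m : nat).
Hypotheses (Dm : D m a = 0) (DmS : D m.+1 a = a).

Lemma dickson_addn_period k : D (k + m) a = D k a.
Proof.
suff : D (k + m) a = D k a /\ D (k.+1 + m) a = D k.+1 a by case.
elim: k => [|k [IHk IHkS]]; first by rewrite add0n add1n Dm DmS dickson0 dickson1.
by split=> //; rewrite !addSn dicksonSS -!addSn IHk IHkS -dicksonSS.
Qed.

Lemma dickson_modn k : D k a = D (k %% m) a.
Proof.
rewrite {1}(divn_eq k m); elim: (k %/ m)%N => [|j IHj]; first by rewrite mul0n add0n.
by rewrite mulSn -addnA addnC dickson_addn_period.
Qed.

Lemma dickson_eqmod k1 k2 : (k1 = k2 %[mod m])%N -> D k1 a = D k2 a.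
Proof. by move=> eq_k; rewrite dickson_modn eq_k -dickson_modn. Qed.

Lemma dickson_dvdn k : (m %| k)%N -> D k a = 0.
Proof. by move=> /eqP mod_k0; rewrite dickson_modn mod_k0 dickson0. Qed.

Lemma dickson_eqmod2 k : (k = 2 %[mod m])%N -> D k a = a ^+ 2.
Proof. by move=> /dickson_eqmod ->; rewrite dickson2. Qed.

Lemma dickson_reflect j : (j <= m)%N -> D (m - j) a = D j a.
Proof.
case: j => [_|j j_lt]; first by rewrite subn0 Dm dickson0.
have Dpred : D m.-1 a = a.
  by case: m Dm DmS j_lt => // m' Dm' DmS' _; rewrite dicksonSS Dm' mulr0 add0r in DmS'.
suff /(_ j j_lt)[] : forall i, (i < m)%N ->
  D (m - i) a = D i a /\ D (m - i.+1) a = D i.+1 a by [].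
elim=> [m_gt0|i IHi i_lt]; first by rewrite subn0 subn1 Dm dickson0 dickson1.
have [IHi0 IHi1] := IHi (ltnW i_lt); split=> //.
have := dicksonSS a (m - i.+2).
rewrite (_ : (m - i.+2).+2 = m - i)%N; last by lia.
rewrite (_ : (m - i.+2).+1 = m - i.+1)%N; last by lia.
rewrite IHi0 IHi1 => Di.
by rewrite dicksonSS Di addrA (addrr_pchar2 charR2) add0r.
Qed.

Lemma dickson_eqmodN2 k : (2 <= m)%N -> (k + 2 = 0 %[mod m])%N -> D k a = a ^+ 2.
Proof.
move=> m_ge2 k2_eq0; rewrite -dickson2 -(dickson_reflect m_ge2); apply: dickson_eqmod.
by apply/eqP; rewrite -(eqn_modDr 2) subnK // modnn k2_eq0 mod0n.
Qed.

Lemma dickson_absmod k : (0 < m)%N -> D k a = D (absmod m k) a.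
Proof.
move=> m_gt0; rewrite dickson_modn /absmod /minn.
case: ltnP => // _; rewrite dickson_reflect //; exact/ltnW/ltn_pmod.
Qed.
End Periodic.
End DicksonChar2.

Lemma card_roots_lt_size (F : finFieldType) (S : {set F}) (p : {poly F}) :
  0 \notin S -> p != 0 -> root p 0 -> {in S, forall b, root p b} ->
  (#|S|.+1 < size p)%N.
Proof.
move=> S0 p_neq0 p0 pS; have := max_poly_roots p_neq0 (rs := enum (0 |: S)).
rewrite -cardE cardsU1 S0 enum_uniq; apply=> //; apply/allP => x.
by rewrite mem_enum in_setU1 => /predU1P[->|/pS].
Qed.

Section DicksonRoots.
Variables (F : finFieldType) (S : {set F}) (m : nat).
Hypotheses (charF2 : 2%N \in [pchar F]) (S0 : 0 \notin S) (S_gt0 : (0 < #|S|)%N).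
Hypotheses (m_gt2 : (2 < m)%N) (m_le : (m <= #|S|.*2.+1)%N).
Hypothesis S_period : {in S, forall b, (Dpoly F m).[b] = 0 /\ (Dpoly F m.+1).[b] = b}.
Local Notation D k a := (Dpoly F k).[a].

Lemma absmod_le_card k : (absmod m k <= #|S|)%N.
Proof. by have := absmod_le m k; lia. Qed.

Lemma dickson_absmod_on k : {in S, forall b, D k b = D (absmod m k) b}.
Proof. by move=> b /S_period[Dm DmS]; apply: dickson_absmod => //; lia. Qed.

Lemma dickson_eq0_on_small r :
  (r <= #|S|)%N -> {in S, forall b, D r b = 0} -> r = 0%N.
Proof.
case: r => // r r_le Dr0; exfalso.
have rootS : {in S, forall b, root (Dpoly F r.+1) b} by move=> b /Dr0 /eqP.
have := card_roots_lt_size S0 (monic_neq0 (Dpoly_monic _ r)).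
by rewrite size_DpolyS /root (dickson_at0 charF2) eqxx => /(_ isT rootS); lia.
Qed.

Lemma dickson_eq_sqr_on_small r :
  (r <= #|S|)%N -> {in S, forall b, D r b = b ^+ 2} -> r = 2%N \/ r = (m - 2)%N.
Proof.
move=> r_le Dr_sqr; have r_neq0 : r != 0%N.
  have /card_gt0P[b bS] := S_gt0; apply: contraNneq S0 => r0.
  by have := Dr_sqr b bS; rewrite r0 dickson0 // => /esym/eqP; rewrite expf_eq0 => /eqP <-.
case: (eqVneq r 2) => [|r_neq2]; [by left | right].
apply/eqP; apply: contraT => r_neqm2; exfalso.
have p_neq0 : Dpoly F r - 'X^2 != 0 by rewrite -size_poly_eq0 size_Dpoly_subX2 //; lia.
have rootS : {in S, forall b, root (Dpoly F r - 'X^2) b}.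
  by move=> b bS; rewrite /root !hornerE Dr_sqr ?subrr.
have := card_roots_lt_size S0 p_neq0.
rewrite size_Dpoly_subX2 // /root !hornerE (dickson_at0 charF2) expr0n subr0 eqxx.
by move=> /(_ isT rootS); lia.
Qed.

Lemma dickson_eq0_onP k : {in S, forall b, D k b = 0} <-> (m %| k)%N.
Proof.
split=> [Dk0|m_dvd b /S_period[Dm DmS]]; last exact: dickson_dvdn m_dvd.
rewrite -absmod_eq0; last by lia.
apply/eqP/dickson_eq0_on_small; first exact: absmod_le_card.
by move=> b bS; rewrite -dickson_absmod_on ?Dk0.
Qed.

Lemma dickson_eq_sqr_onP k :
  {in S, forall b, D k b = b ^+ 2} <-> ((k == 2 %[mod m]) || (k + 2 == 0 %[mod m]))%N.
Proof.
have m_ge2 : (2 <= m)%N by lia.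
split=> [Dk_sqr|]; last first.
  by case/orP=> /eqP k_eq b /S_period[Dm DmS];
    [exact: dickson_eqmod2 k_eq | exact: dickson_eqmodN2 k_eq].
have Dr_sqr : {in S, forall b, D (absmod m k) b = b ^+ 2}.
  by move=> b bS; rewrite -dickson_absmod_on ?Dk_sqr.
case: (dickson_eq_sqr_on_small (absmod_le_card k) Dr_sqr) (absmod_eqmod k (ltnW m_ge2))
  => -> [] k_eq; apply/orP.
- by left; rewrite k_eq.
- by right; rewrite k_eq.
- by right; rewrite -modnDml k_eq modnDml subnK // modnn mod0n.
- by left; rewrite -(eqn_modDr (m - 2)) k_eq addnC subnK // modnn mod0n.
Qed.
End DicksonRoots.

Lemma tr2S (F : finFieldType) n (x : F) : tr2 n.+1 x = tr2 n x + x ^+ (2 ^ n).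
Proof. by rewrite /tr2 big_ord_recr. Qed.

Lemma tr2_0 (F : finFieldType) n : tr2 n (0 : F) = 0.
Proof. by rewrite /tr2 big1 // => i _; rewrite expr0n expn_eq0. Qed.

Definition tr2_poly (R : nzRingType) n : {poly R} := \sum_(i < n) 'X^(2 ^ i).

Lemma size_tr2_poly (R : nzRingType) n : size (tr2_poly R n.+1) = (2 ^ n).+1.
Proof.
elim: n => [|n IHn]; first by rewrite /tr2_poly big_ord1 size_polyXn.
rewrite /tr2_poly big_ord_recr /= -/(tr2_poly R n.+1) addrC size_polyDl size_polyXn //.
by rewrite IHn ltnS ltn_exp2l.
Qed.

Lemma horner_tr2_poly (F : finFieldType) n (x : F) : (tr2_poly F n).[x] = tr2 n x.
Proof. by rewrite horner_sum; apply: eq_bigr => i _; rewrite hornerXn. Qed.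

Lemma card_tr2_le (F : finFieldType) n (c : F) :
  (0 < n)%N -> (#|[set y : F | tr2 n y == c]| <= 2 ^ n.-1)%N.
Proof.
case: n => // n _; set P := tr2_poly F n.+1 - c%:P.
have size_P : size P = (2 ^ n).+1.
  rewrite size_polyDl size_tr2_poly // size_polyN size_polyC ltnS.
  by rewrite (leq_trans (leq_b1 _)) ?expn_gt0.
have P_neq0 : P != 0 by rewrite -size_poly_eq0 size_P.
rewrite -ltnS -size_P cardE; apply: max_poly_roots P_neq0 _ (enum_uniq _).
apply/allP => y; rewrite mem_enum inE => /eqP tr_y.
by rewrite /root hornerD hornerN hornerC horner_tr2_poly tr_y subrr.
Qed.

Section TraceChar2.
Variable F : finFieldType.
Hypothesis charF2 : 2%N \in [pchar F].
Variable n : nat.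

Lemma tr2_sqr (x : F) : tr2 n x ^+ 2 = tr2 n (x ^+ 2).
Proof.
rewrite /tr2 (big_morph (fun y : F => y ^+ 2) (sqrrD_pchar2 charF2) (expr0n _ 2)).
by apply: eq_bigr => i _; rewrite -!exprM mulnC.
Qed.

Lemma tr2_eq01 (x : F) : x ^+ (2 ^ n) = x -> tr2 n x = 0 \/ tr2 n x = 1.
Proof.
move=> x_fixed; have tr_idem : tr2 n x ^+ 2 = tr2 n x.
  apply: (addIr x); rewrite tr2_sqr.
  have := tr2S n x; rewrite x_fixed /tr2 big_ord_recl /= expr1 => <-.
  by rewrite addrC; congr (_ + _); apply: eq_bigr => i _; rewrite /bump /= add1n expnS exprM.
have : tr2 n x * (tr2 n x - 1) = 0 by rewrite mulrBr mulr1 -expr2 tr_idem subrr.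
by move/eqP; rewrite mulf_eq0 subr_eq0 => /orP[] /eqP; auto.
Qed.

Lemma dickson_exp2_pred (a : F) : a != 0 ->
  (Dpoly F (2 ^ n).-1).[a] = a ^+ (2 ^ n).+1 * tr2 n a^-1 ^+ 2.
Proof.
move=> a_neq0; elim: n => [|k IHk]; first by rewrite (dickson0 charF2) /tr2 big_ord0 expr0n mulr0.
have expS_pred : (2 ^ k.+1).-1 = ((2 ^ k).-1).*2.+1.
  by rewrite expnS; have := expn_gt0 2 k; lia.
rewrite expS_pred (dickson_doubleS charF2) prednK ?expn_gt0 // IHk (dickson_exp2 charF2).
rewrite tr2S (sqrrD_pchar2 charF2) expnSr !exprSr exprM exprVn.
have : a ^+ (2 ^ k) != 0 by rewrite expf_neq0.
by move: (a ^+ (2 ^ k)) (tr2 k a^-1) => b t b_neq0; field.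
Qed.
End TraceChar2.

Section TraceSets.
Variables (F : finFieldType) (n : nat).
Hypothesis cardF : #|F| = (2 ^ n)%N.
Local Notation q := (2 ^ n)%N.
Local Notation T0 := (Tset F n false).
Local Notation T1 := (Tset F n true).
Local Notation D k a := (Dpoly F k).[a].

Lemma exponent_gt0 : (0 < n)%N.
Proof. by case: n cardF (finNzRing_gt1 F) => // ->. Qed.

Lemma frobenius_card (x : F) : x ^+ q = x.
Proof. by rewrite -cardF expf_card. Qed.

Lemma pchar2_card : 2%N \in [pchar F].
Proof.
apply/andP; split=> //; have := frobenius_card (-1).
rewrite -(prednK exponent_gt0) expnS exprM sqrrN !expr1n => one_eqN1.
by apply/eqP; rewrite mulr2n {2}one_eqN1 subrr.
Qed.

Lemma tr2_card_eq01 (x : F) : tr2 n x = 0 \/ tr2 n x = 1.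
Proof. exact/(tr2_eq01 pchar2_card)/frobenius_card. Qed.

Lemma Tset_cover (a : F) : [\/ a = 0, a \in T0 | a \in T1].
Proof.
case: (eqVneq a 0) => [|a_neq0]; [by constructor 1 | rewrite !inE a_neq0 /=].
by case: (tr2_card_eq01 a^-1) => ->; rewrite eqxx; [constructor 2 | constructor 3].
Qed.

Lemma card_Tset : #|T0| = (2 ^ n.-1).-1 /\ #|T1| = (2 ^ n.-1)%N.
Proof.
set A := fun c : F => [set y : F | tr2 n y == c].
have A1_compl : A 1 = ~: A 0.
  apply/setP => y; rewrite !inE.
  by case: (tr2_card_eq01 y) => ->; rewrite eqxx ?oner_eq0 // eq_sym oner_eq0.
have card_A : #|A 0| = (2 ^ n.-1)%N /\ #|A 1| = (2 ^ n.-1)%N.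
  have q_eq : q = (2 * 2 ^ n.-1)%N by rewrite -expnS prednK // exponent_gt0.
  have := cardsC (A 0); rewrite -A1_compl cardF q_eq /A /=.
  have := card_tr2_le (0 : F) exponent_gt0; have := card_tr2_le (1 : F) exponent_gt0.
  by move: #|[set y : F | tr2 n y == 0]| #|[set y : F | tr2 n y == 1]|; lia.
have T0_eq : T0 = GRing.inv @^-1: (A 0 :\ 0).
  by apply/setP => a; rewrite !inE invr_eq0 andbC.
have T1_eq : T1 = GRing.inv @^-1: (A 1 :\ 0).
  by apply/setP => a; rewrite !inE invr_eq0 andbC.
rewrite T0_eq T1_eq !card_preimset; try exact: invr_inj.
move: card_A; rewrite (cardsD1 0 (A 0)) (cardsD1 0 (A 1)) !inE tr2_0 eqxx eq_sym oner_eq0 /=.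
by rewrite add1n add0n => -[<- ->].
Qed.

Lemma dickson_card (a : F) :
  a != 0 -> D q a = a /\ D q.-1 a = a ^+ 2 * tr2 n a^-1 ^+ 2.
Proof.
move=> a_neq0; rewrite (dickson_exp2 pchar2_card) frobenius_card.
by rewrite (dickson_exp2_pred pchar2_card) // exprS frobenius_card -expr2.
Qed.

Lemma Tset_tr2 (j : bool) (a : F) : a \in Tset F n j -> a != 0 /\ tr2 n a^-1 = j%:R.
Proof. by rewrite inE => /andP[-> /eqP ->]. Qed.

Lemma dickson_period_Tset0 (a : F) : a \in T0 -> D q.-1 a = 0 /\ D q.-1.+1 a = a.
Proof.
move=> /Tset_tr2[a_neq0 tr_a]; have [Dq Dq_pred] := dickson_card a_neq0.
by rewrite prednK ?expn_gt0 // Dq Dq_pred tr_a expr0n mulr0.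
Qed.

Lemma dickson_period_Tset1 (a : F) : a \in T1 -> D q.+1 a = 0 /\ D q.+2 a = a.
Proof.
move=> /Tset_tr2[a_neq0 tr_a]; have [Dq Dq_pred] := dickson_card a_neq0.
have DqS : D q.+1 a = 0.
  rewrite -(prednK (expn_gt0 2 n)) (dicksonSS pchar2_card) prednK ?expn_gt0 //.
  by rewrite Dq Dq_pred tr_a expr1n mulr1 -expr2 (addrr_pchar2 pchar2_card).
by rewrite (dicksonSS pchar2_card) DqS mulr0 add0r.
Qed.

Lemma Tset_notin0 (j : bool) : 0 \notin Tset F n j.
Proof. by rewrite inE eqxx. Qed.

Lemma card_double_half : q = (2 ^ n.-1).*2.
Proof. by rewrite -mul2n -expnS prednK // exponent_gt0. Qed.

Lemma Tset1_bounds :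
  [/\ (0 < #|T1|)%N, (2 < q.+1)%N & (q.+1 <= #|T1|.*2.+1)%N].
Proof.
have [_ ->] := card_Tset; have := card_double_half; have := expn_gt0 2 n.-1.
by split; lia.
Qed.

Lemma Tset0_bounds : (2 < q)%N ->
  [/\ (0 < #|T0|)%N, (2 < q.-1)%N & (q.-1 <= #|T0|.*2.+1)%N].
Proof. by have [-> _] := card_Tset; have := card_double_half; split; lia. Qed.

Lemma imset_dickson_Tset1 k : ([set D k b | b in T1] == [set 0]) = (q.+1 %| k)%N.
Proof.
have [T1_gt0 q_gt2 q_le] := Tset1_bounds.
have eq0P := dickson_eq0_onP pchar2_card (Tset_notin0 _) T1_gt0 q_gt2 q_le dickson_period_Tset1 k.
by apply/(imset_eq_set1P _)/idP; [rewrite -card_gt0 | move/eq0P | move/eq0P].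
Qed.

Lemma imset_dickson_Tset0 k :
  (2 < q)%N -> ([set D k a | a in T0] == [set 0]) = (q.-1 %| k)%N.
Proof.
case/Tset0_bounds=> T0_gt0 q_gt2 q_le.
have eq0P := dickson_eq0_onP pchar2_card (Tset_notin0 _) T0_gt0 q_gt2 q_le dickson_period_Tset0 k.
by apply/(imset_eq_set1P _)/idP; [rewrite -card_gt0 | move/eq0P | move/eq0P].
Qed.

Lemma dickson_Tset1_eq_sqrP k : {in T1, forall b, D k b = b ^+ 2} <->
  ((k == 2 %[mod q.+1]) || (k + 2 == 0 %[mod q.+1]))%N.
Proof.
have [T1_gt0 q_gt2 q_le] := Tset1_bounds.
exact: (dickson_eq_sqr_onP pchar2_card (Tset_notin0 _) T1_gt0 q_gt2 q_le dickson_period_Tset1).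
Qed.

Lemma dickson_Tset0_eq_sqrP k : (2 < q)%N -> {in T0, forall a, D k a = a ^+ 2} <->
  ((k == 2 %[mod q.-1]) || (k + 2 == 0 %[mod q.-1]))%N.
Proof.
case/Tset0_bounds=> T0_gt0 q_gt2 q_le.
exact: (dickson_eq_sqr_onP pchar2_card (Tset_notin0 _) T0_gt0 q_gt2 q_le dickson_period_Tset0).
Qed.

Lemma dickson_expn_Tset0 (a : F) e :
  a \in T0 -> D (q ^ e).-1 a = 0 /\ D (q ^ e).+1 a = a ^+ 2.
Proof.
have qe_gt0 : (0 < q ^ e)%N by rewrite !expn_gt0.
case/dickson_period_Tset0=> Dm DmS; split.
  exact: (dickson_dvdn pchar2_card Dm DmS (dvdn_pred_predX _ _)).
exact: (dickson_eqmod2 pchar2_card Dm DmS (succ_mod_of_dvd_pred qe_gt0 (dvdn_pred_predX _ _))).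
Qed.

Lemma dickson_expn_Tset1 (a : F) e : a \in T1 ->
  if odd e then D (q ^ e).-1 a = a ^+ 2 /\ D (q ^ e).+1 a = 0
  else D (q ^ e).-1 a = 0 /\ D (q ^ e).+1 a = a ^+ 2.
Proof.
have qe_gt0 : (0 < q ^ e)%N by rewrite !expn_gt0.
case/dickson_period_Tset1=> Dm DmS; case: ifP => [e_odd|/negbT e_even]; split.
- apply: (dickson_eqmodN2 pchar2_card Dm DmS); first by rewrite ltnS expn_gt0.
  exact: (pred_add2_mod_of_dvd_succ qe_gt0 (dvdn_succ_succ_expn _ e_odd)).
- exact: (dickson_dvdn pchar2_card Dm DmS (dvdn_succ_succ_expn _ e_odd)).
- exact: (dickson_dvdn pchar2_card Dm DmS (dvdn_succ_pred_expn _ e_even)).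
- apply: (dickson_eqmod2 pchar2_card Dm DmS).
  exact: (succ_mod_of_dvd_pred qe_gt0 (dvdn_succ_pred_expn _ e_even)).
Qed.
End TraceSets.

Unset Implicit Arguments.
Theorem proposition3p3 (F : finFieldType) (n : nat) (hq : #|F| = (2 ^ n)%N) :
  let q := (2 ^ n)%N in
  let D := fun (k : nat) (a : F) => (Dpoly F k).[a] in
  let T0 := Tset F n false in
  let T1 := Tset F n true in
  (* (i) *)
  (forall k : nat,
     ([set D k b | b in T1] == [set 0]) = (q.+1 %| k)%N) /\
  ((2 < q)%N -> forall k : nat,
     ([set D k a | a in T0] == [set 0]) = (q.-1 %| k)%N) /\
  (* (ii) *)
  (forall k : nat,
     (forall b, b \in T1 -> D k b = b ^+ 2) <->
     ((k == 2 %[mod q.+1]) || (k + 2 == 0 %[mod q.+1]))%N) /\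
  ((2 < q)%N -> forall k : nat,
     (forall a, a \in T0 -> D k a = a ^+ 2) <->
     ((k == 2 %[mod q.-1]) || (k + 2 == 0 %[mod q.-1]))%N) /\
  (* (iii) *)
  (forall e : nat, ~~ odd e ->
     forall a : F, D (q ^ e).-1 a = 0 /\ D (q ^ e).+1 a = a ^+ 2) /\
  (forall e : nat, odd e ->
     (forall a : F, a \in T0 \/ a = 0 ->
        D (q ^ e).-1 a = 0 /\ D (q ^ e).+1 a = a ^+ 2) /\
     (forall a : F, a \in T1 ->
        D (q ^ e).-1 a = a ^+ 2 /\ D (q ^ e).+1 a = 0)).
Proof.
move=> q D T0 T1.
split; first exact: imset_dickson_Tset1.
split; first by move=> q_gt2 k; exact: imset_dickson_Tset0.
split; first exact: dickson_Tset1_eq_sqrP.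
split; first by move=> q_gt2 k; exact: dickson_Tset0_eq_sqrP.
have D_at0 k : D k 0 = 0 := dickson_at0 (pchar2_card hq) k.
split=> [e e_even a|e e_odd].
  case: (Tset_cover hq a) => [->|aT0|aT1].
  - by rewrite !D_at0 expr0n.
  - exact: dickson_expn_Tset0.
  - by have := dickson_expn_Tset1 hq e aT1; rewrite (negbTE e_even).
split=> [a [aT0|->]|a aT1].
- exact: dickson_expn_Tset0.
- by rewrite !D_at0 expr0n.
- by have := dickson_expn_Tset1 hq e aT1; rewrite e_odd.
Qed.
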